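(* Let $P$ be a finite nonempty set and let $\emptyset=Y_0\subseteq Y_1\subseteq\dots\subseteq Y_m\subsetneq P$ be a fixed sequence of subsets. Consider the random process: choose $p$ uniformly at random from $P$; then for $t=1,\dots,m$, if $p\in Y_t$, replace $p$ by a fresh element chosen uniformly at random from $P\setminus Y_t$ (independently of all previous choices), and call this a resampling. Then the expected total number of samplings (the initial choice plus all resamplings) is $O(\log|P|)$.
   Context: In the application, $P$ is the set of vertex pairs realizing the diameter, and $Y_t$ is the set of such pairs whose distance has decreased after the first $t$ edge insertions of a sequence that does not decrease the diameter; the sequence is fixed independently of the random choices. *)

From HB Require Import structures.
From mathcomp Require Import all_boot all_order all_algebra.
From mathcomp Require Import reals exp.
Set Implicit Arguments. Unset Strict Implicit. Unset Printing Implicit Defensive.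
Import Order.TTheory GRing.Theory Num.Theory.
Local Open Scope ring_scope.

Definition unif (R : realType) (T : finType) (S : {set T}) (x : T) : R :=
  if x \in S then (#|S|%:R)^-1 else 0.

(* resample_dist P Y t x k = Pr[ after steps 1..t, the current element is x
   and exactly k samplings (initial choice + resamplings) have been made ]. *)
Fixpoint resample_dist (R : realType) (T : finType) (P : {set T})
    (Y : nat -> {set T}) (t : nat) : T -> nat -> R :=
  match t with
  | 0 => fun x k => unif R P x * (k == 1%N)%:R
  | t'.+1 => fun y k =>
      (y \notin Y t)%:R * resample_dist R P Y t' y k
      + unif R (P :\: Y t) y *
        (if k is k'.+1 then \sum_(x in Y t) resample_dist R P Y t' x k' else 0)
  end.

(* Expected total number of samplings after the m steps (at most m+1). *)
Definition expected_samplings (R : realType) (T : finType) (P : {set T})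
    (Y : nat -> {set T}) (m : nat) : R :=
  \sum_(x : T) \sum_(k < m.+2) (k : nat)%:R * resample_dist R P Y m x k.

From HB Require Import structures.
From mathcomp Require Import all_boot all_order all_algebra.
From mathcomp Require Import reals exp.
From mathcomp Require Import zify ring lra.
Set Implicit Arguments. Unset Strict Implicit. Unset Printing Implicit Defensive.
Import Order.TTheory GRing.Theory Num.Theory.
Local Open Scope ring_scope.

(* Write a_t = #|P :\: Y t| for the number of admissible elements after step t.
   1. Whatever happened before, the current element after step t is uniformly
      distributed on P :\: Y t ([mass_unif]): a resampling draws uniformly from
      P :\: Y t, and an element of P :\: Y (t-1) that survives step t is
      uniform on P :\: Y t.
   2. Step t+1 adds one sampling exactly when the current element lies in
      Y (t+1), so the expectation grows by Pr[p \in Y (t+1)]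
      ([expected_step]); by 1. this probability is 1 - a_(t+1) / a_t
      ([expected_increment]).
   3. Since 1 - c/a <= ln a - ln c ([ln_ratio_lower]), the increments
      telescope: the expectation after t steps is at most
      1 + ln |P| - ln a_t <= 1 + ln |P| ([expected_bound]).
   As |P| >= 2, this is at most (1 + 1 / ln 2) * ln |P| ([claim15]). *)

Section Uniform.
Variables (R : realType) (T : finType).

Lemma sum_unif_in (A S : {set T}) :
  \sum_(x in A) unif R S x = #|A :&: S|%:R / #|S|%:R.
Proof.
rewrite /unif -big_mkcondr /=.
rewrite (eq_bigl (fun x => x \in A :&: S)); last by move=> x; rewrite in_setI.
by rewrite sumr_const mulr_natl.
Qed.

Lemma sum_unif (S : {set T}) : S != set0 -> \sum_x unif R S x = 1.
Proof.
move=> S_neq0; rewrite /unif -big_mkcond sumr_const -(mulr_natr (_^-1)) mulVf //.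
by rewrite pnatr_eq0 -lt0n card_gt0.
Qed.

Lemma card_setD_split (A B C : {set T}) : B \subset C ->
  #|A :\: B| = (#|(A :\: B) :&: C| + #|A :\: C|)%N.
Proof. by move=> BC; rewrite -(cardsID C (A :\: B)) setDDl (setUidPr BC). Qed.

End Uniform.

Lemma ln_ratio_lower (R : realType) (a c : R) :
  0 < c -> c <= a -> 1 - c / a <= ln a - ln c.
Proof.
move=> c_gt0 ca; have a_gt0 : 0 < a by apply: lt_le_trans ca.
have h := @le_ln1Dx R (c / a - 1).
rewrite addrCA subrr addr0 ln_div ?posrE // in h.
have : -1 < c / a - 1 by have := divr_gt0 c_gt0 a_gt0; lra.
by move=> /h; lra.
Qed.

Lemma resample_dist_supp (R : realType) (T : finType) (P : {set T})
    (Y : nat -> {set T}) t x k :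
  (t.+1 < k)%N -> resample_dist R P Y t x k = 0.
Proof.
elim: t x k => [|t IH] x k hk /=.
  have -> : (k == 1)%N = false by apply/eqP => e; rewrite e in hk.
  by rewrite mulr0.
rewrite IH ?mulr0 ?add0r; last by lia.
case: k hk => [//|k] hk.
by rewrite big1 ?mulr0 // => x' _; apply: IH; lia.
Qed.

Section Recursions.
Variables (R : realType) (T : finType) (P : {set T}) (Y : nat -> {set T}).

Definition mass t x := \sum_(k < t.+2) resample_dist R P Y t x k.

Definition partial_expect t x :=
  \sum_(k < t.+2) (k : nat)%:R * resample_dist R P Y t x k.

Lemma expected_samplingsE t :
  expected_samplings R P Y t = \sum_x partial_expect t x.
Proof. by []. Qed.

Lemma mass_step t y : mass t.+1 y = (y \notin Y t.+1)%:R * mass t y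
   + unif R (P :\: Y t.+1) y * \sum_(x in Y t.+1) mass t x.
Proof.
rewrite /mass /= big_split /= -!mulr_sumr; congr (_ + _).
  by rewrite big_ord_recr /= resample_dist_supp // addr0.
by congr (_ * _); rewrite big_ord_recl /= add0r exchange_big.
Qed.

(* The same decomposition for the partial expectation; a resampling adds one
   to the count, which contributes the extra mass term. *)
Lemma partial_expect_step t y :
  partial_expect t.+1 y = (y \notin Y t.+1)%:R * partial_expect t y
    + unif R (P :\: Y t.+1) y *
      \sum_(x in Y t.+1) (partial_expect t x + mass t x).
Proof.
rewrite /partial_expect /=; under eq_bigr do rewrite mulrDr.
rewrite big_split /=; congr (_ + _).
  rewrite mulr_sumr big_ord_recr /= resample_dist_supp // !mulr0 addr0.
  by apply: eq_bigr => k _; rewrite mulrCA.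
rewrite big_ord_recl /= mul0r add0r.
transitivity (unif R (P :\: Y t.+1) y *
  \sum_(i < t.+2) \sum_(x in Y t.+1) (i.+1)%:R * resample_dist R P Y t x i).
  rewrite mulr_sumr; apply: eq_bigr => i _.
  by rewrite mulrCA /bump /= add1n mulr_sumr.
congr (_ * _); rewrite exchange_big; apply: eq_bigr => x _.
rewrite /mass -big_split; apply: eq_bigr => k _.
by rewrite -addn1 natrD mulrDl mul1r.
Qed.

Lemma expected_samplings0 : P != set0 -> expected_samplings R P Y 0 = 1.
Proof.
move=> P_neq0; rewrite -(@sum_unif R T P P_neq0); apply: eq_bigr => x _.
by rewrite !big_ord_recr big_ord0 /= !mul0r mul1r mulr1 !add0r.
Qed.

Lemma expected_step t : P :\: Y t.+1 != set0 ->
  expected_samplings R P Y t.+1 =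
  expected_samplings R P Y t + \sum_(x in Y t.+1) mass t x.
Proof.
move=> rest_neq0; rewrite !expected_samplingsE.
under eq_bigr do rewrite partial_expect_step.
rewrite big_split /= -mulr_suml sum_unif // mul1r big_split /= addrA.
congr (_ + _); rewrite [RHS](bigID (fun x => x \in Y t.+1)) /= addrC.
congr (_ + _); rewrite [RHS]big_mkcond /=; apply: eq_bigr => x _.
by case: (x \in Y t.+1); rewrite ?mul1r ?mul0r.
Qed.

End Recursions.

Section IncreasingSequence.
Variables (R : realType) (T : finType) (P : {set T}) (Y : nat -> {set T}).
Variable m : nat.
Hypotheses (Y0 : Y 0%N = set0)
  (Y_mono : forall t, (t < m)%N -> Y t \subset Y t.+1)
  (Ym_proper : Y m \proper P).

Lemma Y_sub_Ym t : (t <= m)%N -> Y t \subset Y m.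
Proof.
move=> tm; rewrite -(subnKC tm).
have : (m - t <= m - t)%N by [].
elim: {-2}(m - t)%N => [|d IH] hd; first by rewrite addn0.
have d_lt : (t + d < m)%N by lia.
by rewrite addnS (subset_trans (IH (ltnW hd)) (Y_mono d_lt)).
Qed.

Lemma card_rest_gt0 t : (t <= m)%N -> (0 < #|P :\: Y t|)%N.
Proof.
move=> tm; have YtP := subset_trans (Y_sub_Ym tm) (proper_sub Ym_proper).
rewrite cardsD (setIidPr YtP) subn_gt0.
exact: leq_ltn_trans (subset_leq_card (Y_sub_Ym tm)) (proper_card Ym_proper).
Qed.

Let rest_neq0 t : (t <= m)%N -> P :\: Y t != set0.
Proof. by move=> tm; rewrite -card_gt0 card_rest_gt0. Qed.

Lemma mass_unif t : (t <= m)%N -> forall x, mass R P Y t x = unif R (P :\: Y t) x.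
Proof.
elim: t => [|t IH] tm x.
  by rewrite /mass /= !big_ord_recr big_ord0 /= Y0 setD0 mulr0 mulr1 !add0r.
have tm' : (t <= m)%N by lia.
have Ysub := Y_mono tm.
rewrite mass_step IH //; under eq_bigr do rewrite IH //.
rewrite sum_unif_in setIC.
have := card_setD_split P Ysub; have := card_rest_gt0 tm'.
have := card_rest_gt0 tm; rewrite /unif.
case: (boolP (x \in P :\: Y t.+1)) => [|x_out _ _ _].
  rewrite in_setD => /andP [xY xP] ct1 ct hc.
  have -> : x \in P :\: Y t by rewrite in_setD xP (contra (subsetP Ysub x) xY).
  rewrite xY /= mul1r hc natrD; field.
  by rewrite -natrD -hc !pnatr_eq0 -!lt0n ct1 ct.
rewrite mul0r addr0; case: (boolP (x \in Y t.+1)) => [_|xY]; first by rewrite mul0r.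
move: x_out; rewrite in_setD xY /= => xP.
by rewrite in_setD (negbTE xP) andbF mulr0.
Qed.

Lemma expected_increment t : (t < m)%N ->
  expected_samplings R P Y t.+1 =
  expected_samplings R P Y t + #|(P :\: Y t) :&: Y t.+1|%:R / #|P :\: Y t|%:R.
Proof.
move=> tm; rewrite expected_step ?rest_neq0 //.
under eq_bigr do rewrite mass_unif ?(ltnW tm) //.
by rewrite sum_unif_in setIC.
Qed.

Lemma expected_bound t : (t <= m)%N ->
  expected_samplings R P Y t <= 1 + ln (#|P|%:R) - ln (#|P :\: Y t|%:R).
Proof.
elim: t => [|t IH] tm.
  rewrite expected_samplings0 ?Y0 ?setD0 ?addrK //.
  by apply: contraNneq (rest_neq0 (leq0n m)) => ->; rewrite set0D.
have tm' : (t <= m)%N by lia.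
have hc := card_setD_split P (Y_mono tm).
have ct := card_rest_gt0 tm'.
have ratio : #|(P :\: Y t) :&: Y t.+1|%:R / #|P :\: Y t|%:R
   = 1 - #|P :\: Y t.+1|%:R / #|P :\: Y t|%:R :> R.
  rewrite hc natrD; field.
  by rewrite -natrD -hc pnatr_eq0 -lt0n ct.
have step : 1 - #|P :\: Y t.+1|%:R / #|P :\: Y t|%:R <=
   ln (#|P :\: Y t|%:R) - ln (#|P :\: Y t.+1|%:R) :> R.
  apply: ln_ratio_lower; first by rewrite ltr0n card_rest_gt0.
  by rewrite ler_nat hc leq_addl.
rewrite expected_increment // ratio; have := IH tm'; lra.
Qed.

End IncreasingSequence.

Theorem claim15 (R : realType) :
  exists C : R, 0 < C /\
    forall (T : finType) (P : {set T}) (Y : nat -> {set T}) (m : nat),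
      (2 <= #|P|)%N ->
      Y 0%N = set0 ->
      (forall t, (t < m)%N -> Y t \subset Y t.+1) ->
      Y m \proper P ->
      expected_samplings R P Y m <= C * ln (#|P|%:R).
Proof.
have ln2_gt0 : 0 < ln (2 : R) by apply: ln_gt0; lra.
exists (1 + (ln (2 : R))^-1); split.
  by have := invr_gt0 (ln (2 : R)); rewrite ln2_gt0; lra.
move=> T P Y m P_ge2 Y0 Y_mono Ym_proper.
have bound := expected_bound R Y0 Y_mono Ym_proper (leqnn m).
have rest_ln_ge0 : 0 <= ln (#|P :\: Y m|%:R : R).
  by apply: ln_ge0; rewrite ler1n (card_rest_gt0 Y_mono Ym_proper).
have ln2_le : ln (2 : R) <= ln (#|P|%:R).
  by rewrite ler_ln ?posrE ?ltr0n ?ler_nat //; apply: leq_trans P_ge2.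
have one_le : 1 <= ln (#|P|%:R : R) / ln 2 by rewrite ler_pdivlMr // mul1r.
move: bound; set E := expected_samplings R P Y m.
rewrite mulrDl mul1r [_^-1 * _]mulrC; lra.
Qed.
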